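(* Let $\mathcal G$ be a second-countable ample groupoid such that (1) $\mathcal G$ is minimal and effective, and (2) every compact open subset of $\mathcal G$ is regular open. Then $A_{\mathbb B}(\mathcal G)$ is congruence-simple.
   Context: $\mathbb B=(\{0,1\},\text{or},\text{and})$. An ample groupoid is a topological groupoid whose unit space $\mathcal G^{(0)}$ is locally compact Hausdorff and totally disconnected and whose source and range maps $s,r$ are local homeomorphisms ($\mathcal G$ need not be Hausdorff). $\mathcal G$ is minimal if $\mathcal G^{(0)}$ has no open invariant subsets other than $\varnothing$ and $\mathcal G^{(0)}$ (invariant: $s(\gamma)\in D\Rightarrow r(\gamma)\in D$); effective if the interior of $\{\gamma:s(\gamma)=r(\gamma)\}$ equals $\mathcal G^{(0)}$. A subset is regular open if it equals the interior of its closure. The Steinberg algebra $A_{\mathbb B}(\mathcal G)$ is the set of $\mathbb B$-valued functions on $\mathcal G$ that are finite sums of characteristic functions of compact open bisections, with pointwise addition and convolution $(f*g)(\gamma)=\sum_{\alpha\beta=\gamma}f(\alpha)g(\beta)$. A hemiring is congruence-simple if its only congruences are the full relation and the diagonal. *)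

From HB Require Import structures.
From mathcomp Require Import all_boot all_order.
From mathcomp Require Import boolp classical_sets functions topology.

Set Implicit Arguments. Unset Strict Implicit. Unset Printing Implicit Defensive.
Local Open Scope classical_set_scope.

Section Groupoid.
Context {G : topologicalType}.

(* A groupoid is encoded on its set of arrows G; the units are identified
   with their identity arrows.  s, r : source/range, mul x y is the product
   x y, meaningful (and only used) when s x = r y; inv is the inverse. *)
Definition is_groupoid (s r : G -> G) (mul : G -> G -> G) (inv : G -> G) :=
  [/\ (forall x, s (s x) = s x /\ r (s x) = s x /\ s (r x) = r x /\ r (r x) = r x),
      (forall x y, s x = r y -> s (mul x y) = s y /\ r (mul x y) = r x),
      (forall x y z, s x = r y -> s y = r z -> mul (mul x y) z = mul x (mul y z)),
      (forall x, mul (r x) x = x /\ mul x (s x) = x) &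
      (forall x, [/\ s (inv x) = r x, r (inv x) = s x,
                    mul x (inv x) = r x & mul (inv x) x = s x])].

Definition unit_space (s : G -> G) : set G := range s.

Definition rel_open (X U : set G) := exists2 O, open O & U = X `&` O.

Definition local_homeo_onto (f : G -> G) (X : set G) :=
  (forall x, X (f x)) /\
  forall x, exists U : set G,
    [/\ open U, U x, {within U, continuous f},
        (forall y z, U y -> U z -> f y = f z -> y = z) &
        (forall W, open W -> W `<=` U -> rel_open X (f @` W))].

Definition rel_hausdorff (X : set G) :=
  forall x y, X x -> X y -> x <> y ->
  exists U V, [/\ open U, open V, U x, V y & X `&` U `&` V = set0].

Definition rel_locally_compact (X : set G) :=
  forall x, X x -> exists K O,
    [/\ compact K, K `<=` X, open O, O x & X `&` O `<=` K].

Definition ample_groupoid (s r : G -> G) (mul : G -> G -> G) (inv : G -> G) :=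
  [/\ is_groupoid s r mul inv,
      {within [set p : G * G | s p.1 = r p.2], continuous (fun p => mul p.1 p.2)},
      continuous inv,
      [/\ rel_locally_compact (unit_space s), rel_hausdorff (unit_space s)
        & totally_disconnected (unit_space s)] &
      local_homeo_onto s (unit_space s) /\ local_homeo_onto r (unit_space s)].

Definition invariant (s r : G -> G) (D : set G) :=
  forall g, D (s g) -> D (r g).

Definition minimal (s r : G -> G) :=
  forall D, D `<=` unit_space s -> rel_open (unit_space s) D -> invariant s r D ->
  D = set0 \/ D = unit_space s.

Definition effective (s r : G -> G) :=
  [set g | s g = r g]° = unit_space s.

Definition bisection (s r : G -> G) (B : set G) :=
  (forall x y, B x -> B y -> s x = s y -> x = y) /\
  (forall x y, B x -> B y -> r x = r y -> x = y).

Definition compact_open_bisection (s r : G -> G) (B : set G) :=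
  [/\ compact B, open B & bisection s r B].

(* Steinberg algebra over the Boolean semifield B = ({0,1}, or, and):
   finite sums (= pointwise or) of characteristic functions of
   compact open bisections *)
Definition steinberg (s r : G -> G) (f : G -> bool) :=
  exists n (Bs : nat -> set G),
    (forall i, (i < n)%N -> compact_open_bisection s r (Bs i)) /\
    (forall g, f g = true <-> exists2 i, (i < n)%N & Bs i g).

Definition badd (f g : G -> bool) : G -> bool := fun x => f x || g x.

(* convolution: (f*g)(c) = sum_{ab = c} f(a) g(b), the sum in B *)
Definition bconv (s r : G -> G) (mul : G -> G -> G) (f g : G -> bool) : G -> bool :=
  fun c => `[< exists a b, [/\ s a = r b, mul a b = c, f a & g b] >].

Definition congruence (s r : G -> G) (mul : G -> G -> G)
    (R : (G -> bool) -> (G -> bool) -> Prop) :=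
  let A := steinberg s r in
  [/\ (forall f, A f -> R f f),
      (forall f g, A f -> A g -> R f g -> R g f),
      (forall f g h, A f -> A g -> A h -> R f g -> R g h -> R f h) &
      (forall f f' g g', A f -> A f' -> A g -> A g' -> R f f' -> R g g' ->
         R (badd f g) (badd f' g') /\ R (bconv s r mul f g) (bconv s r mul f' g'))].

Definition congruence_simple (s r : G -> G) (mul : G -> G -> G) :=
  forall R, congruence s r mul R ->
    (forall f g, steinberg s r f -> steinberg s r g -> R f g) \/
    (forall f g, steinberg s r f -> steinberg s r g -> R f g -> f = g).

End Groupoid.

(* Let R be a congruence identifying f <> g, and call h null when h ~ 0;
   null functions form an ideal closed downwards.
   1. f + g is congruent to both f and g, giving congruent h1 <= h2, h1 <> h2.
   2. As supp h1 is regular open, some nonempty compact open bisection C lies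
      in supp h2 and misses supp h1.
   3. After translating by C^-1, h2 covers the units s(C) while h1 has no
      units in its support; effectiveness gives a nonempty compact open set
      of units U inside s(C) such that 1_U (C^-1 h1) 1_U = 0, whereas
      1_U <= 1_U (C^-1 h2) 1_U.  Hence 1_U is null.
   4. By minimality every unit is the range of an arrow starting in U, so by
      compactness finitely many conjugates E 1_U E^-1 dominate the source of
      any compact open bisection B; thus 1_B, and then all of A_B(G), is null. *)

From HB Require Import structures.
From mathcomp Require Import all_boot all_order.
From mathcomp Require Import boolp classical_sets functions topology.
From mathcomp Require Import zify.
From Stdlib Require List.

Set Implicit Arguments. Unset Strict Implicit. Unset Printing Implicit Defensive.
Local Open Scope classical_set_scope.

Section FiniteSubcovers.
Variable T : topologicalType.

Lemma compact_finite_subcover (K : set T) (I : Type) (P : I -> set T) :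
  compact K -> (forall i, closed (P i)) ->
  (forall y, K y -> exists i, ~ P i y) ->
  exists l : seq I, forall y, K y -> exists i, List.In i l /\ ~ P i y.
Proof.
move=> cK cP cov; apply: contrapT => nofin.
pose meet (l : seq I) := [set y | K y /\ forall i, List.In i l -> P i y].
pose F := filter_from [set: seq I] meet.
have FF : Filter F.
  apply: filter_from_filter; first by exists [::].
  move=> l1 l2 _ _; exists (l1 ++ l2) => // y [Ky Hy].
  by split; split => // i Hi; apply: Hy; apply/List.in_app_iff; [left|right].
have PF : ProperFilter F.
  apply: filter_from_proper => l _; apply: contrapT => /set0P/negP.
  rewrite negbK => /eqP meet0; apply: nofin; exists l => y Ky.
  apply: contrapT => ne; have : meet l y.
    by split => // i Hi; apply: contrapT => nPi; apply: ne; exists i.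
  by rewrite meet0.
have FK : F K by exists [::] => // y [].
have [y [Ky cly]] := cK F PF FK.
have [i nPi] := cov y Ky.
have nb : nbhs y (~` P i) by apply: open_nbhs_nbhs; split=> //; exact: closed_openC.
have Fi : F (meet [:: i]) by exists [:: i].
have [z [[_ Pz] nPz]] := cly _ _ Fi nb.
by apply: nPz; apply: Pz; left.
Qed.

Lemma open_finite_meet (I : Type) (f : I -> set T) (l : seq I) :
  (forall i, open (f i)) -> open [set y | forall i, List.In i l -> f i y].
Proof.
move=> oF; elim: l => [|i l IH].
  have -> : [set y | forall i, List.In i [::] -> f i y] = setT.
    by apply/seteqP; split => // y _ i [].
  exact: openT.
have -> : [set y | forall j, List.In j (i :: l) -> f j y] =
    f i `&` [set y | forall j, List.In j l -> f j y].
  apply/seteqP; split => y.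
    by move=> H; split; [apply: H; left|move=> j Hj; apply: H; right].
  by move=> [fi H] j [<-|Hj] //; apply: H.
exact: openI.
Qed.

End FiniteSubcovers.

Section LocalHomeomorphisms.
Variables (T : topologicalType) (X : set T) (f : T -> T).
Hypothesis lhf : local_homeo_onto f X.

Lemma local_homeo_continuous : continuous f.
Proof.
move=> x; have [U [oU Ux cU _ _]] := lhf.2 x.
by move: cU; rewrite continuous_open_subspace // => /(_ x); apply; rewrite inE.
Qed.

Lemma local_homeo_open (W : set T) : open X -> open W -> open (f @` W).
Proof.
move=> oX oW; rewrite openE => _ [w Ww <-].
have [U [oU Uw _ _ oimg]] := lhf.2 w.
have [O oO e] := oimg (W `&` U) (openI oW oU) (@subIsetr _ _ _).
have nO : nbhs (f w) (X `&` O).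
  apply: open_nbhs_nbhs; split; first exact: openI.
  by rewrite -e; exists w.
by apply: filterS nO; rewrite -e => y [z [Wz _] <-]; exists z.
Qed.

(* On an open set D where f is injective, the points of D whose image is
   close to f d0 are close to d0 (continuity of the local inverse). *)
Lemma local_homeo_section_nbhs (D N : set T) d0 : open X -> open D ->
  (forall x y, D x -> D y -> f x = f y -> x = y) -> D d0 -> nbhs d0 N ->
  exists O, [/\ open O, O (f d0) & forall d, D d -> O (f d) -> N d].
Proof.
move=> oX oD iD Dd0 Nd0; exists (f @` (N° `&` D)); split.
- by apply: local_homeo_open => //; apply: openI => //; exact: open_interior.
- by exists d0.
- move=> d Dd [d' [Nd' Dd'] e]; rewrite -(iD _ _ Dd' Dd e).
  exact: interior_subset.
Qed.

End LocalHomeomorphisms.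

Section HausdorffSubspace.
Variables (T : topologicalType) (X : set T).
Hypothesis hausX : rel_hausdorff X.

Lemma separate_point_compact x (B : set T) : X x -> B `<=` X -> compact B ->
  ~ B x -> exists U V, [/\ open U, open V, U x, B `<=` V & X `&` U `&` V = set0].
Proof.
move=> Xx BX cB nBx.
pose I := {p : set T * set T | [/\ open p.1, open p.2, p.1 x &
  X `&` p.1 `&` p.2 = set0]}.
have cov : forall y, B y -> exists i : I, ~ (~` (sval i).2) y.
  move=> y By; have nxy : x <> y by move=> h; apply: nBx; rewrite h.
  have [U [V [oU oV Ux Vy e]]] := hausX Xx (BX _ By) nxy.
  by exists (exist _ (U, V) (And4 oU oV Ux e)).
have [l Hl] := @compact_finite_subcover _ B I (fun i => ~` (sval i).2) cB
  (fun i => open_closedC (let: exist _ (And4 _ o _ _) := i in o)) cov.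
exists [set y | forall i, List.In i l -> (sval i).1 y].
exists (\bigcup_(i in [set i | List.In i l]) (sval i).2); split.
- by apply: open_finite_meet => -[[U V] []].
- by apply: bigcup_open => -[[U V] []].
- by move=> -[[U V] []].
- move=> y By; have [i [Hi nV]] := Hl y By; exists i => //; exact: contrapT.
- apply/seteqP; split => // z [[Xz Uz] [[[U V] [oU oV Ux e]] Hi /= Vz]].
  have : (X `&` U `&` V) z by split; [split => //; exact: (Uz _ Hi)|].
  by rewrite e.
Qed.

Lemma separate_compacts (A B : set T) : A `<=` X -> B `<=` X -> compact A ->
  compact B -> A `&` B = set0 ->
  exists U V, [/\ open U, open V, A `<=` U, B `<=` V & X `&` U `&` V = set0].
Proof.
move=> AX BX cA cB eAB.
pose I := {p : set T * set T | [/\ open p.1, open p.2, B `<=` p.2 &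
  X `&` p.1 `&` p.2 = set0]}.
have cov : forall y, A y -> exists i : I, ~ (~` (sval i).1) y.
  move=> y Ay; have nBy : ~ B y by move=> By; have : (A `&` B) y by []; rewrite eAB.
  have [U [V [oU oV Uy BV e]]] := separate_point_compact (AX _ Ay) BX cB nBy.
  by exists (exist _ (U, V) (And4 oU oV BV e)).
have [l Hl] := @compact_finite_subcover _ A I (fun i => ~` (sval i).1) cA
  (fun i => open_closedC (let: exist _ (And4 o _ _ _) := i in o)) cov.
exists (\bigcup_(i in [set i | List.In i l]) (sval i).1).
exists [set y | forall i, List.In i l -> (sval i).2 y]; split.
- by apply: bigcup_open => -[[U V] []].
- by apply: open_finite_meet => -[[U V] []].
- move=> y Ay; have [i [Hi nU]] := Hl y Ay; exists i => //; exact: contrapT.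
- by move=> y By -[[U V] [oU oV BV e]] /= _; apply: BV.
- apply/seteqP; split => // z [[Xz [[[U V] [oU oV Ux e]] Hi /= Uz]] Vz].
  have : (X `&` U `&` V) z by split; [split => //|exact: (Vz _ Hi)].
  by rewrite e.
Qed.

End HausdorffSubspace.

Section QuasiComponent.
Variables (T : topologicalType) (X K : set T) (x : T).
Hypotheses (hausX : rel_hausdorff X) (cK : compact K) (KX : K `<=` X) (Kx : K x).

Definition relclopen (C : set T) :=
  (exists2 V, open V & C = K `&` V) /\ (exists2 F, closed F & C = K `&` F).

Definition quasi_component := [set y | K y /\ forall C, relclopen C -> C x -> C y].

Lemma quasi_component_x : quasi_component x. Proof. by split. Qed.

Lemma relclopenI C1 C2 : relclopen C1 -> relclopen C2 -> relclopen (C1 `&` C2).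
Proof.
move=> [[V1 oV1 ->] [F1 cF1 f1]] [[V2 oV2 ->] [F2 cF2 f2]].
split; first by exists (V1 `&` V2); [exact: openI|rewrite setIACA setIid].
exists (F1 `&` F2); first exact: closedI.
by rewrite f1 f2 setIACA setIid.
Qed.

Lemma relclopen_finite_meet (I : Type) (f : I -> set T) l :
  (forall i, relclopen (f i)) ->
  relclopen (K `&` [set y | forall i, List.In i l -> f i y]).
Proof.
move=> cf; elim: l => [|i l IH].
  have -> : K `&` [set y | forall i, List.In i [::] -> f i y] = K.
    by apply/seteqP; split => y; [case|move=> Ky; split => // ? []].
  split; first by exists setT; [exact: openT|rewrite setIT].
  by exists setT; [exact: closedT|rewrite setIT].
have -> : K `&` [set y | forall j, List.In j (i :: l) -> f j y] =
    f i `&` (K `&` [set y | forall j, List.In j l -> f j y]).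
  apply/seteqP; split => y.
    by move=> [Ky H]; split; [apply: H; left|split => // j Hj; apply: H; right].
  by move=> [fi [Ky H]]; split => // j [<-|Hj] //; apply: H.
exact: relclopenI.
Qed.

Lemma quasi_component_nbhs (Y : set T) : open Y -> quasi_component `<=` Y ->
  exists C, [/\ relclopen C, C x & C `<=` Y].
Proof.
move=> oY QY.
have cKY : compact (K `&` ~` Y) by apply: compact_closedI => //; exact: open_closedC.
pose I := {p : set T * set T | [/\ relclopen p.1, p.1 x, closed p.2 &
  p.1 = K `&` p.2]}.
have cov : forall y, (K `&` ~` Y) y -> exists i : I, ~ (sval i).2 y.
  move=> y [Ky nYy].
  have [C [cC Cx nCy]] : exists C, [/\ relclopen C, C x & ~ C y].
    apply: contrapT => H; apply: nYy; apply: QY; split => // C cC Cx.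
    by apply: contrapT => nCy; apply: H; exists C.
  have [_ [F cF eF]] := cC.
  by exists (exist _ (C, F) (And4 cC Cx cF eF)) => /= Fy; apply: nCy; rewrite eF.
have [l Hl] := @compact_finite_subcover _ _ I (fun i => (sval i).2) cKY
  (fun i => let: exist _ (And4 _ _ c _) := i in c) cov.
exists (K `&` [set y | forall i, List.In i l -> (sval i).1 y]); split.
- by apply: relclopen_finite_meet => -[[C F] []].
- by split => // -[[C F] []].
- move=> y [Ky Hy]; apply: contrapT => nYy.
  have [[[C F] [cC Cx cF eF]] [Hi /= nF]] := Hl y (conj Ky nYy).
  have eCF : C = K `&` F by exact: eF.
  by have := Hy _ Hi; rewrite /= eCF => -[].
Qed.

Lemma quasi_component_compact : compact quasi_component.
Proof.
pose D := [set p : set T * set T | [/\ relclopen p.1, p.1 x, closed p.2 &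
  p.1 = K `&` p.2]].
have -> : quasi_component = K `&` \bigcap_(p in D) p.2.
  apply/seteqP; split => y.
    move=> [Ky H]; split => // -[C F] [cC Cx cF eF] /=.
    by have := H _ cC Cx; rewrite eF => -[].
  move=> [Ky H]; split => // C cC Cx; have [_ [F cF eF]] := cC.
  by rewrite eF; split => //; apply: (H (C, F)).
by apply: compact_closedI => //; apply: closed_bigI => -[C F] [].
Qed.

Lemma relclopen_cut C U V : relclopen C -> C `<=` U `|` V -> open U -> open V ->
  X `&` U `&` V = set0 -> relclopen (C `&` U).
Proof.
move=> [[V0 oV0 e0] [F0 cF0 f0]] CUV oU oV e; split.
- exists (V0 `&` U); first exact: openI.
  by rewrite e0 setIA.
- exists (F0 `&` ~` V); first by apply: closedI => //; exact: open_closedC.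
  apply/seteqP; split => y.
    move=> [Cy Uy]; have := Cy; rewrite f0 => -[Ky Fy].
    split => //; split => // Vy.
    have : (X `&` U `&` V) y by split; [split => //; exact: KX|].
    by rewrite e.
  move=> [Ky [Fy nVy]]; have Cy : C y by rewrite f0.
  by split => //; case: (CUV _ Cy).
Qed.

Lemma quasi_component_one_side U V : open U -> open V -> X `&` U `&` V = set0 ->
  quasi_component `<=` U `|` V -> quasi_component `<=` U \/ quasi_component `<=` V.
Proof.
move=> oU oV e QUV.
have [C0 [cC0 C0x C0UV]] := quasi_component_nbhs (openU oU oV) QUV.
have C0VU : C0 `<=` V `|` U by move=> y /C0UV [] ?; [right|left].
have e' : X `&` V `&` U = set0 by rewrite -setIA (setIC V) setIA.
have [Ux|Vx] := C0UV _ C0x.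
- have cC1 := relclopen_cut cC0 C0UV oU oV e.
  by left => y [_ H]; exact: (H _ cC1 (conj C0x Ux)).2.
- have cC1 := relclopen_cut cC0 C0VU oV oU e'.
  by right => y [_ H]; exact: (H _ cC1 (conj C0x Vx)).2.
Qed.

Lemma quasi_component_connected : connected quasi_component.
Proof.
move=> B [b Bb] [O oO eO] [F cF eF].
have QX : quasi_component `<=` X by move=> y [Ky _]; exact: KX.
have cB : compact B.
  by rewrite eF; apply: compact_closedI => //; exact: quasi_component_compact.
have cA : compact (quasi_component `&` ~` O).
  by apply: compact_closedI; [exact: quasi_component_compact|exact: open_closedC].
have dis : B `&` (quasi_component `&` ~` O) = set0.
  by apply/seteqP; split => // y; rewrite eO => -[[_ Oy] [_ nOy]].
have BX : B `<=` X by rewrite eO => y [/QX].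
have [U [V [oU oV BU AV e]]] := separate_compacts hausX BX
  (fun y (h : (quasi_component `&` ~` O) y) => QX _ h.1) cB cA dis.
have QUV : quasi_component `<=` U `|` V.
  move=> y Qy; have [Oy|nOy] := pselect (O y); last by right; apply: AV.
  by left; apply: BU; rewrite eO.
have outside y : quasi_component y -> U y -> V y -> False.
  move=> Qy Uy Vy; suff : (X `&` U `&` V) y by rewrite e.
  by split; [split; [exact: QX|]|].
case: (quasi_component_one_side oU oV e QUV) => QV.
- rewrite eO; apply/seteqP; split=> [y []//|y Qy]; split => //.
  by apply: contrapT => nOy; apply: (outside y Qy (QV _ Qy)); apply: AV.
- have Qb : quasi_component b by move: Bb; rewrite eO => -[].
  by case: (outside b Qb (BU _ Bb) (QV _ Qb)).
Qed.

End QuasiComponent.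

(* A locally compact, Hausdorff, totally disconnected open subspace X has a
   basis of compact open sets: the quasi-component of a point in a compact
   neighbourhood is connected, hence a singleton, so some relatively clopen
   (hence compact open) neighbourhood fits in any given open set. *)
Lemma compact_open_basis (T : topologicalType) (X : set T) x (O : set T) :
  open X -> rel_locally_compact X -> rel_hausdorff X -> totally_disconnected X ->
  X x -> open O -> O x ->
  exists K, [/\ compact K, open K, K `<=` X `&` O & K x].
Proof.
move=> oX lc haus td Xx oO Ox.
have [K [O1 [cK KX oO1 O1x sub]]] := lc x Xx.
have Kx : K x by apply: sub.
pose W := O `&` O1 `&` X.
have oW : open W by apply: openI; [exact: openI|exact: oX].
have WK : W `<=` K by move=> y [[_ ?] ?]; apply: sub.
have QW : quasi_component K x `<=` W.
  have : quasi_component K x `<=` connected_component X x.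
    apply: connected_component_max; first exact: quasi_component_x.
      by move=> y [Ky _]; exact: KX.
    exact: quasi_component_connected haus cK KX Kx.
  by rewrite (td x Xx) => h y /h ->.
have [C [[[V oV eV] [F cF eF]] Cx CW]] := quasi_component_nbhs cK Kx oW QW.
exists C; split => //.
- by rewrite eF; exact: compact_closedI.
- suff -> : C = W `&` V by exact: openI.
  apply/seteqP; split => y.
    by move=> Cy; split; [exact: CW|move: Cy; rewrite eV => -[]].
  by move=> [Wy Vy]; rewrite eV; split => //; exact: WK.
- by move=> y /CW [[? _] ?].
Qed.

Section Groupoid.
Variables (G : topologicalType) (s r : G -> G) (mul : G -> G -> G) (inv : G -> G).
Hypothesis grp : is_groupoid s r mul inv.

Local Notation X := (unit_space s).

Lemma s_idem x : s (s x) = s x. Proof. by case: grp => H _ _ _ _; case: (H x). Qed.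
Lemma r_s x : r (s x) = s x. Proof. by case: grp => H _ _ _ _; case: (H x) => _ []. Qed.
Lemma s_r x : s (r x) = r x.
Proof. by case: grp => H _ _ _ _; case: (H x) => _ [_ []]. Qed.
Lemma s_mul x y : s x = r y -> s (mul x y) = s y.
Proof. by case: grp => _ H _ _ _ /H []. Qed.
Lemma r_mul x y : s x = r y -> r (mul x y) = r x.
Proof. by case: grp => _ H _ _ _ /H []. Qed.
Lemma mulA x y z : s x = r y -> s y = r z -> mul (mul x y) z = mul x (mul y z).
Proof. by case: grp => _ _ H _ _; apply: H. Qed.
Lemma mul_r x : mul (r x) x = x. Proof. by case: grp => _ _ _ H _; case: (H x). Qed.
Lemma mul_s x : mul x (s x) = x. Proof. by case: grp => _ _ _ H _; case: (H x). Qed.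
Lemma s_inv x : s (inv x) = r x. Proof. by case: grp => _ _ _ _ H; case: (H x). Qed.
Lemma r_inv x : r (inv x) = s x. Proof. by case: grp => _ _ _ _ H; case: (H x). Qed.
Lemma mulV x : mul x (inv x) = r x. Proof. by case: grp => _ _ _ _ H; case: (H x). Qed.
Lemma mulVx x : mul (inv x) x = s x. Proof. by case: grp => _ _ _ _ H; case: (H x). Qed.

Lemma invK x : inv (inv x) = x.
Proof.
have e : s (inv (inv x)) = s x by rewrite s_inv r_inv.
rewrite -[inv (inv x)]mul_s e -(mulVx x) -mulA ?s_inv //.
by rewrite mulVx s_inv mul_r.
Qed.

Lemma unitP u : X u <-> s u = u.
Proof. by split=> [[x _ <-]|<-]; [rewrite s_idem|exists u]. Qed.
Lemma unit_s u : X u -> s u = u. Proof. by move/unitP. Qed.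
Lemma unit_r u : X u -> r u = u. Proof. by move=> /unitP <-; rewrite r_s. Qed.
Lemma unit_of_s x : X (s x). Proof. by exists x. Qed.
Lemma unit_of_r x : X (r x). Proof. by apply/unitP; rewrite s_r. Qed.

Definition setmul (C D : set G) :=
  [set g | exists c d, [/\ C c, D d, s c = r d & g = mul c d]].

Lemma unit_bisection U : U `<=` X -> bisection s r U.
Proof.
move=> UX; split => x y Ux Uy.
  by rewrite (unit_s (UX _ Ux)) (unit_s (UX _ Uy)).
by rewrite (unit_r (UX _ Ux)) (unit_r (UX _ Uy)).
Qed.

Lemma setmul_bisection C D : bisection s r C -> bisection s r D ->
  bisection s r (setmul C D).
Proof.
move=> [sC rC] [sD rD]; split.
- move=> _ _ [c [d [Cc Dd e ->]]] [c' [d' [Cc' Dd' e' ->]]].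
  rewrite !s_mul // => /(sD _ _ Dd Dd') edd; subst d'.
  by rewrite (sC _ _ Cc Cc') // e e'.
- move=> _ _ [c [d [Cc Dd e ->]]] [c' [d' [Cc' Dd' e' ->]]].
  rewrite !r_mul // => /(rC _ _ Cc Cc') ecc; subst c'.
  by rewrite (rD _ _ Dd Dd') // -e -e'.
Qed.

Lemma inv_image (C : set G) : inv @` C = inv @^-1` C.
Proof.
apply/seteqP; split => g; first by move=> [c Cc <-]; rewrite /= invK.
by move=> Cg; exists (inv g) => //; rewrite invK.
Qed.

Section Ample.
Hypotheses (mul_cont : {within [set p : G * G | s p.1 = r p.2],
                         continuous (fun p => mul p.1 p.2)})
           (inv_cont : continuous inv)
           (s_lh : local_homeo_onto s X) (r_lh : local_homeo_onto r X)
           (unit_hausdorff : rel_hausdorff X) (unit_lc : rel_locally_compact X)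
           (unit_td : totally_disconnected X).

Lemma s_continuous : continuous s. Proof. exact: local_homeo_continuous s_lh. Qed.
Lemma r_continuous : continuous r. Proof. exact: local_homeo_continuous r_lh. Qed.

(* the unit space is open: near a unit, s is injective and fixes the unit *)
Lemma unit_space_open : open X.
Proof.
rewrite openE => x Xx; have [U [oU Ux _ iU _]] := s_lh.2 x.
have nU : nbhs x U by apply: open_nbhs_nbhs.
have nsU : nbhs x (s @^-1` U) by apply: (@s_continuous x U); rewrite (unit_s Xx).
apply: filterS (filterI nU nsU) => y [Uy sUy].
by apply/unitP; apply: iU => //; rewrite s_idem.
Qed.

Lemma s_open (W : set G) : open W -> open (s @` W).
Proof. exact: (local_homeo_open s_lh unit_space_open). Qed.
Lemma r_open (W : set G) : open W -> open (r @` W).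
Proof. exact: (local_homeo_open r_lh unit_space_open). Qed.

Lemma open_bisection_nbhs x : exists U, [/\ open U, U x & bisection s r U].
Proof.
have [U [oU Ux _ iU _]] := s_lh.2 x; have [V [oV Vx _ iV _]] := r_lh.2 x.
exists (U `&` V); split => //; first exact: openI.
by split => y z [Uy Vy] [Uz Vz]; [apply: iU|apply: iV].
Qed.

(* the product of an open set with an open s-injective set is open: near
   g = c d, the arrow g' is (g' (d')^-1) d' with d' in D, s d' = s g' *)
Lemma setmul_open C D : open C -> open D ->
  (forall x y, D x -> D y -> s x = s y -> x = y) -> open (setmul C D).
Proof.
move=> oC oD iD; rewrite openE => _ [c0 [d0 [Cc0 Dd0 e0 ->]]].
set g0 := mul c0 d0.
have sg0 : s g0 = s d0 by rewrite /g0 s_mul.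
have g0d0 : mul g0 (inv d0) = c0 by rewrite /g0 mulA ?r_inv // mulV -e0 mul_s.
have nC : nbhs (mul g0 (inv d0)) C by rewrite g0d0; exact: open_nbhs_nbhs.
have comp0 : s g0 = r (inv d0) by rewrite sg0 r_inv.
have [[N1 N2] /= [n1 n2] sub] :=
  (subspace_continuousP _ _).1 mul_cont (g0, inv d0) comp0 C nC.
have [O [oO Od0 hO]] :=
  local_homeo_section_nbhs s_lh unit_space_open oD iD Dd0 (inv_cont n2).
have nO : nbhs g0 (s @^-1` (O `&` s @` D)).
  apply: (@s_continuous g0); apply: open_nbhs_nbhs; split.
    by apply: openI => //; exact: s_open.
  by rewrite sg0; split => //; exists d0.
apply: filterS (filterI n1 nO) => g [N1g [Og [d Dd sd]]].
exists (mul g (inv d)), d; split => //.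
- apply: (sub (g, inv d)) => /=; last by rewrite r_inv.
  by split => //=; apply: hO => //; rewrite sd.
- by rewrite s_mul ?s_inv // r_inv.
- by rewrite mulA ?s_inv ?r_inv // mulVx sd mul_s.
Qed.

(* the composable pairs form a closed set, since the unit space is Hausdorff *)
Lemma composable_closed : closed [set p : G * G | s p.1 = r p.2].
Proof.
rewrite -openC openE => -[a b] /= neq.
have [U [V [oU oV Ua Vb e]]] := unit_hausdorff (unit_of_s a) (unit_of_r b) neq.
exists (s @^-1` U, r @^-1` V) => /=.
  split; [apply: (@s_continuous a)|apply: (@r_continuous b)];
    exact: open_nbhs_nbhs.
move=> [a' b'] [/= Ua' Vb'] /= e'.
have : (X `&` U `&` V) (s a') by split; [split; [exact: unit_of_s|]|rewrite e'].
by rewrite e.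
Qed.

(* the product set is the image of the compact set of composable pairs in
   C x D under the continuous multiplication *)
Lemma setmul_compact C D : compact C -> compact D -> compact (setmul C D).
Proof.
move=> cC cD.
have -> : setmul C D = (fun p : G * G => mul p.1 p.2) @`
    ((C `*` D) `&` [set p : G * G | s p.1 = r p.2]).
  apply/seteqP; split => g; first by move=> [c [d [Cc Dd e ->]]]; exists (c, d).
  by move=> [[c d] [[/= Cc Dd] /= e] <-]; exists c, d.
apply: continuous_compact.
  by apply: continuous_subspaceW mul_cont; exact: subIsetr.
by apply: compact_closedI; [exact: compact_setX|exact: composable_closed].
Qed.

Lemma cob_setmul C D : compact_open_bisection s r C ->
  compact_open_bisection s r D -> compact_open_bisection s r (setmul C D).
Proof.
move=> [cC oC bC] [cD oD bD]; split.
- exact: setmul_compact.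
- by apply: setmul_open => //; case: bD.
- exact: setmul_bisection.
Qed.

Lemma cob_inv C : compact_open_bisection s r C ->
  compact_open_bisection s r (inv @` C).
Proof.
move=> [cC oC [sC rC]]; split.
- by apply: continuous_compact cC; apply: continuous_subspaceT.
- by rewrite inv_image; apply: (continuousP _).1 oC.
- rewrite inv_image; split => x y /= Cx Cy e.
  + by rewrite -[x]invK -[y]invK (rC _ _ Cx Cy) // !r_inv.
  + by rewrite -[x]invK -[y]invK (sC _ _ Cx Cy) // !s_inv.
Qed.

(* On an open set D where s is injective, the preimage in D of a compact
   K included in s(D) is compact: it is the image of K under the continuous
   local inverse of s. *)
Lemma section_compact (D K : set G) : open D ->
  (forall x y, D x -> D y -> s x = s y -> x = y) ->
  compact K -> K `<=` s @` D -> compact (D `&` s @^-1` K).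
Proof.
move=> oD iD cK KD; have [[g0 _]|nD] := pselect (exists g, D g); last first.
  have -> : D `&` s @^-1` K = set0.
    by apply/seteqP; split => // g [Dg _]; apply: nD; exists g.
  exact: compact0.
pose psi y := xget g0 (fun d => D d /\ s d = y).
have psiP y : K y -> D (psi y) /\ s (psi y) = y.
  move=> Ky; have [d Dd sd] := KD _ Ky.
  by apply: (xgetPex g0 (P := fun d => D d /\ s d = y)); exists d.
have -> : D `&` s @^-1` K = psi @` K.
  apply/seteqP; split => c.
    move=> [Dc Ksc]; exists (s c) => //; have [Dp sp] := psiP _ Ksc.
    exact: iD.
  by move=> [y Ky <-]; have [Dp sp] := psiP _ Ky; split => //; rewrite /= sp.
apply: continuous_compact => //; apply/subspace_continuousP => y Ky N nN.
have [Dp sp] := psiP _ Ky.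
have [O [oO Oy hO]] :=
  local_homeo_section_nbhs s_lh unit_space_open oD iD Dp nN.
rewrite sp in Oy; apply: filterS (open_nbhs_nbhs (conj oO Oy)) => z Oz Kz.
by have [Dz sz] := psiP _ Kz; apply: hO => //; rewrite sz.
Qed.

(* compact open bisections form a basis of the topology of G: inside an open
   bisection around g, cut down to a compact open neighbourhood of s g *)
Lemma cob_basis g (W : set G) : open W -> W g ->
  exists C, [/\ compact_open_bisection s r C, C g & C `<=` W].
Proof.
move=> oW Wg; have [U [oU Ug [bs br]]] := open_bisection_nbhs g.
pose D := W `&` U.
have oD : open D by exact: openI.
have iD x y : D x -> D y -> s x = s y -> x = y by move=> [_ ?] [_ ?]; apply: bs.
have [K [cK oK KXD Ksg]] := compact_open_basis unit_space_open unit_lc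
  unit_hausdorff unit_td (unit_of_s g) (s_open oD) (ex_intro2 _ _ g (conj Wg Ug) erefl).
exists (D `&` s @^-1` K); split.
- split.
  + by apply: section_compact => // y /KXD [].
  + by apply: openI => //; apply: (continuousP _).1 oK; exact: s_continuous.
  + by split => x y [[_ Ux] _] [[_ Uy] _]; [apply: bs|apply: br].
- by split.
- by move=> y [[]].
Qed.

Lemma cob_unit U : compact U -> open U -> U `<=` X ->
  compact_open_bisection s r U.
Proof. by move=> cU oU /unit_bisection. Qed.

(* In a minimal groupoid the saturation r(s^-1(U)) of a nonempty open set U
   of units is open, invariant and nonempty, hence is the whole unit space. *)
Lemma saturation_full U : minimal s r -> open U -> U `<=` X -> (exists u, U u) ->
  r @` (s @^-1` U) = X.
Proof.
move=> Hmin oU UX [u Uu].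
set D := r @` (s @^-1` U).
have DX : D `<=` X by move=> _ [h _ <-]; exact: unit_of_r.
have oD : open D by apply: r_open; apply: (continuousP _).1 oU; exact: s_continuous.
case: (Hmin D DX) => // [|g [h Uh rh]|D0].
- by exists D => //; apply/seteqP; split => [y Dy|y []//]; split => //; exact: DX.
- by exists (mul g h); rewrite /= ?s_mul ?r_mul.
- have : D u by exists u; rewrite /= ?unit_s ?unit_r //; exact: UX.
  by rewrite D0.
Qed.

Definition avoids (O D : set G) := forall d, D d -> ~ (O (s d) /\ O (r d)).

(* In an effective groupoid, a compact open bisection D without units cannot
   fix every point of a nonempty open set of units Om: otherwise an open
   piece of D would lie in the isotropy {g | s g = r g}, whose interior is X. *)
Lemma effective_moves_point (Om D : set G) : effective s r ->
  open Om -> (exists w, Om w) -> compact_open_bisection s r D ->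
  (forall d, D d -> ~ X d) ->
  exists x, Om x /\ ~ (exists d, [/\ D d, s d = x & r d = x]).
Proof.
move=> Heff oOm [w0 Omw0] [_ oD [bs _]] DX; apply: contrapT => H.
have fixes x : Om x -> exists d, [/\ D d, s d = x & r d = x].
  by move=> Omx; apply: contrapT => h; apply: H; exists x.
have [d0 [Dd0 sd0 rd0]] := fixes _ Omw0.
pose D' := D `&` s @^-1` Om.
have oD' : open D'.
  by apply: openI => //; apply: (continuousP _).1 oOm; exact: s_continuous.
have D'fix : D' `<=` [set g | s g = r g].
  move=> d [Dd Omsd]; have [d' [Dd' sd' rd']] := fixes _ Omsd.
  by rewrite /= -(bs _ _ Dd' Dd sd') sd' rd'.
have : [set g | s g = r g]° d0.
  apply: (interiorS D'fix); rewrite (proj1 (interior_id _) oD').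
  by split => //; rewrite /= sd0.
by rewrite Heff => /(DX _ Dd0).
Qed.

(* ... so Om can be shrunk to a nonempty open set avoided by D: separate a
   non-fixed point x from r d (if x = s d) or from the compact s(D). *)
Lemma shrink_avoiding (Om D : set G) : effective s r -> open Om -> Om `<=` X ->
  (exists w, Om w) -> compact_open_bisection s r D -> (forall d, D d -> ~ X d) ->
  exists Om', [/\ open Om', Om' `<=` Om, (exists w, Om' w) & avoids Om' D].
Proof.
move=> Heff oOm OmX neOm cobD DX.
have [x [Omx nfix]] := effective_moves_point Heff oOm neOm cobD DX.
have [cD oD [bs br]] := cobD.
have [[d0 Dd0 sd0]|nimg] := pselect (exists2 d, D d & s d = x).
- have nrx : x <> r d0 by move=> e; apply: nfix; exists d0; split.
  have [U1 [W1 [oU1 oW1 U1x W1r e1]]] :=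
    unit_hausdorff (OmX _ Omx) (unit_of_r d0) nrx.
  exists (Om `&` U1 `&` s @` (D `&` r @^-1` W1)); split.
  + apply: openI; first exact: openI.
    by apply: s_open; apply: openI => //; apply: (continuousP _).1 oW1;
      exact: r_continuous.
  + by move=> y [[]].
  + by exists x; split; [split|exists d0].
  + move=> d Dd [[[_ _] [d' [Dd' W1d'] e']] [[_ U1rd] _]].
    rewrite (bs _ _ Dd' Dd e') in W1d'.
    have : (X `&` U1 `&` W1) (r d) by split; [split; [exact: unit_of_r|]|].
    by rewrite e1.
- have csD : compact (s @` D).
    by apply: continuous_compact cD; apply: continuous_subspaceT; exact: s_continuous.
  have sDX : s @` D `<=` X by move=> _ [d _ <-]; exact: unit_of_s.
  have nx : ~ (s @` D) x by move=> [d Dd sd]; apply: nimg; exists d.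
  have [U [V [oU oV Ux DV e]]] :=
    separate_point_compact unit_hausdorff (OmX _ Omx) sDX csD nx.
  exists (Om `&` U); split; [exact: openI|by move=> y []|by exists x|].
  move=> d Dd [[_ Usd] _].
  have : (X `&` U `&` V) (s d).
    by split; [split; [exact: unit_of_s|]|apply: DV; exists d].
  by rewrite e.
Qed.

Lemma shrink_avoiding_finite n (Ds : nat -> set G) (Om : set G) :
  effective s r -> open Om -> Om `<=` X -> (exists w, Om w) ->
  (forall j, (j < n)%N ->
     compact_open_bisection s r (Ds j) /\ forall d, Ds j d -> ~ X d) ->
  exists Om', [/\ open Om', Om' `<=` Om, (exists w, Om' w) &
    forall j, (j < n)%N -> avoids Om' (Ds j)].
Proof.
move=> Heff oOm OmX neOm; elim: n => [|n IH] hD; first by exists Om; split.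
have [Om1 [oOm1 sub1 ne1 H1]] := IH (fun j jn => hD j (ltnW jn)).
have [cD DX] := hD n (ltnSn n).
have [Om2 [oOm2 sub2 ne2 H2]] :=
  shrink_avoiding Heff oOm1 (fun y h => OmX _ (sub1 _ h)) ne1 cD DX.
exists Om2; split => //; first by move=> y /sub2 /sub1.
move=> j; rewrite ltnS leq_eqVlt => /orP [/eqP ->|jn] //.
by move=> d Dd [/sub2 h1 /sub2 h2]; apply: (H1 j jn d).
Qed.

Local Notation A := (steinberg s r).
Local Notation conv := (bconv s r mul).

Definition zerof : G -> bool := fun _ => false.
Definition charf (B : set G) : G -> bool := fun g => `[< B g >].

Lemma charfP (B : set G) g : charf B g = true <-> B g.
Proof. by split => /asboolP. Qed.

Lemma eq_asbool (b : bool) (P : Prop) : (b = true <-> P) -> b = `[< P >].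
Proof. by case: b => h; apply/esym; [apply/asboolP/h|apply/negbTE/asboolPn => /h]. Qed.

Lemma steinberg_zero : A zerof.
Proof. by exists 0%N, (fun _ => set0); split => // g; split => // -[]. Qed.

Lemma steinberg_charf B : compact_open_bisection s r B -> A (charf B).
Proof.
move=> cB; exists 1%N, (fun _ => B); split => // g; rewrite charfP.
by split => [Bg|[]]; [exists 0%N|].
Qed.

Lemma steinberg_add f g : A f -> A g -> A (badd f g).
Proof.
move=> [n1 [B1 [c1 h1]]] [n2 [B2 [c2 h2]]].
exists (n1 + n2)%N, (fun k => if (k < n1)%N then B1 k else B2 (k - n1)%N).
split=> [k kn|x]; first by case: ifP => kn1; [exact: c1|apply: c2; lia].
rewrite /badd; split.
  case/orP => [/h1 [i i1 Bi]|/h2 [j j2 Bj]]; first by exists i; [lia|rewrite i1].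
  by exists (n1 + j)%N; [lia|rewrite ifF ?addKn //; lia].
move=> [k kn]; case: ifP => kn1 Bk; first by apply/orP; left; apply/h1; exists k.
by apply/orP; right; apply/h2; exists (k - n1)%N => //; lia.
Qed.

(* the convolution of two sums of bisections is the sum of the pairwise
   products of the bisections, indexed by k = i * n2 + j *)
Lemma steinberg_conv f g : A f -> A g -> A (conv f g).
Proof.
move=> [n1 [B1 [c1 h1]]] [n2 [B2 [c2 h2]]].
exists (n1 * n2)%N, (fun k => setmul (B1 (k %/ n2)%N) (B2 (k %% n2)%N)).
have n2p k : (k < n1 * n2)%N -> (0 < n2)%N by nia.
split=> [k kn|c].
  apply: cob_setmul; [apply: c1|apply: c2]; rewrite ?ltn_divLR ?ltn_pmod //;
  exact: n2p kn.
rewrite /bconv; split.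
  move/asboolP => [a [b [e <- fa gb]]].
  have [i i1 Bi] := (h1 a).1 fa; have [j j2 Bj] := (h2 b).1 gb.
  have n2p' : (0 < n2)%N by lia.
  exists (i * n2 + j)%N; first nia.
  exists a, b; split => //; first by rewrite divnMDl // divn_small // addn0.
  by rewrite modnMDl modn_small.
move=> [k kn [a [b [Ba Bb e ->]]]]; have n2p' := n2p _ kn.
apply/asboolP; exists a, b; split => //.
  by apply/h1; exists (k %/ n2)%N => //; rewrite ltn_divLR.
by apply/h2; exists (k %% n2)%N => //; rewrite ltn_pmod.
Qed.

Lemma steinberg_support f : A f -> compact [set x | f x] /\ open [set x | f x].
Proof.
move=> [n [Bs [cB hB]]].
have -> : [set x | f x] = \bigcup_(i in [set i | (i < n)%N]) Bs i.
  by apply/seteqP; split => x /hB.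
split; last by apply: bigcup_open => i /cB [].
elim: n cB {hB} => [|n IH] cB.
  have -> : \bigcup_(i in [set i | (i < 0)%N]) Bs i = set0.
    by apply/seteqP; split => // x [].
  exact: compact0.
have -> : \bigcup_(i in [set i | (i < n.+1)%N]) Bs i =
    \bigcup_(i in [set i | (i < n)%N]) Bs i `|` Bs n.
  apply/seteqP; split => x.
    move=> [i /=]; rewrite ltnS leq_eqVlt => /orP [/eqP ->|iln] Bx; first by right.
    by left; exists i.
  move=> [[i i1 Bi]|Bn]; first by exists i => //=; exact: ltnW.
  by exists n => //=.
by apply: compactU; [apply: IH => i ii; apply: cB; lia|case: (cB n (ltnSn n))].
Qed.

Lemma conv0l (h : G -> bool) : conv zerof h = zerof.
Proof. by apply/funext => c; apply/negbTE/asboolPn => -[a [b []]]. Qed.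

Lemma conv0r (h : G -> bool) : conv h zerof = zerof.
Proof. by apply/funext => c; apply/negbTE/asboolPn => -[a [b []]]. Qed.

Lemma baddC (f g : G -> bool) : badd f g = badd g f.
Proof. by apply/funext => x; rewrite /badd orbC. Qed.

Lemma baddK (f : G -> bool) : badd f f = f.
Proof. by apply/funext => x; rewrite /badd orbb. Qed.

Lemma badd_absorb (a m : G -> bool) : (forall g, a g -> m g) -> badd m a = m.
Proof.
move=> le; apply/funext => x; rewrite /badd.
by case: (boolP (a x)) => [/le ->|]; rewrite ?orbF.
Qed.

Definition bsum (I : Type) (F : I -> G -> bool) (l : seq I) : G -> bool :=
  foldr (fun i acc => badd (F i) acc) zerof l.

Lemma bsumP (I : Type) (F : I -> G -> bool) l g :
  bsum F l g = true <-> exists i, List.In i l /\ F i g = true.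
Proof.
elim: l => [|i l IH] /=; first by split=> // -[? []].
rewrite /badd; split.
  by case/orP => [Fi|/IH [j [jl Fj]]]; [exists i; split; [left|]|exists j; split; [right|]].
move=> [j [[<-|jl] Fj]]; apply/orP; first by left.
by right; apply/IH; exists j.
Qed.

(* If compact open sets are regular open and supp h2 is not inside supp h1,
   some nonempty compact open bisection lies in supp h2 and misses supp h1:
   a bisection of h2 through a point outside supp h1 is not contained in the
   closure of supp h1, since its interior would then lie in supp h1. *)
Lemma separating_bisection (h1 h2 : G -> bool) :
  (forall S : set G, compact S -> open S -> regopen S) -> A h1 -> A h2 ->
  (exists x, h2 x /\ ~~ h1 x) ->
  exists C, [/\ compact_open_bisection s r C, (exists c, C c),
    (forall c, C c -> h2 c) & (forall c, C c -> ~~ h1 c)].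
Proof.
move=> Hreg Ah1 [n [Bs [cBs hBs]]] [x [h2x nh1x]].
have [cS oS] := steinberg_support Ah1.
have [i iln Bx] := (hBs x).1 h2x.
have [_ oB _] := cBs i iln.
have [d [Bd ncl]] : exists d, Bs i d /\ ~ closure [set y | h1 y] d.
  apply: contrapT => H.
  have BS : Bs i `<=` closure [set y | h1 y].
    by move=> y By; apply: contrapT => nc; apply: H; exists y.
  have := interiorS BS; rewrite (Hreg _ cS oS) (proj1 (interior_id _) oB).
  by move=> /(_ x Bx) /= h; move: nh1x; rewrite h.
have [N [nN NS]] : exists N, nbhs d N /\ ~ ([set y | h1 y] `&` N !=set0).
  apply: contrapT => H; apply: ncl => N nN; apply: contrapT => h.
  by apply: H; exists N.
have oW : open (Bs i `&` N°) by apply: openI => //; exact: open_interior.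
have [C [cC Cd CW]] := cob_basis oW (conj Bd nN).
exists C; split => //; first by exists d.
  by move=> c /CW [Bc _]; apply/(hBs c).2; exists i.
move=> c /CW [_ Nc]; apply/negP => h1c; apply: NS; exists c; split => //.
exact: interior_subset.
Qed.

(* translating by C^-1 moves C onto the units s(C) *)
Lemma conv_inv_units (C : set G) (h : G -> bool) : (forall c, C c -> h c) ->
  forall v, (s @` C) v -> conv (charf (inv @` C)) h v.
Proof.
move=> Ch _ [c Cc <-]; apply/asboolP; exists (inv c), c.
by split; rewrite ?s_inv ?mulVx //; [apply/charfP; exists c|exact: Ch].
Qed.

(* ... and a function vanishing on C becomes one vanishing on the units:
   if c^-1 b is a unit then b = c (c^-1 b) ... = c *)
Lemma conv_inv_no_units (C : set G) (h : G -> bool) : (forall c, C c -> ~~ h c) ->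
  forall y, conv (charf (inv @` C)) h y -> ~ X y.
Proof.
move=> nh y /asboolP [a [b [e <- /charfP [c Cc eac] hb]]] Xy; subst a.
have sc : s c = mul (inv c) b by rewrite -r_inv -(r_mul e) (unit_r Xy).
have rcb : r c = r b by rewrite -s_inv e.
have ecb : c = b.
  transitivity (mul c (mul (inv c) b)); first by rewrite -sc mul_s.
  by rewrite -mulA ?r_inv // mulV rcb mul_r.
by move: (nh _ Cc); rewrite ecb hb.
Qed.

(* compressing by a set of units U kills what U avoids *)
Lemma compress_avoided (U : set G) (k : G -> bool) : U `<=` X -> avoids U [set d | k d] ->
  conv (conv (charf U) k) (charf U) = zerof.
Proof.
move=> UX avU; apply/funext => y; apply/negbTE/asboolPn.
move=> [x [z [e _ /asboolP [u [b [e' exub /charfP Uu kb]]] /charfP Uz]]].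
subst x.
apply: (avU b kb); split.
- by rewrite -(s_mul e') e (unit_r (UX _ Uz)).
- by rewrite -e' (unit_s (UX _ Uu)).
Qed.

(* ... and keeps the units of U in the support of k *)
Lemma compress_units (U : set G) (k : G -> bool) : U `<=` X -> (forall u, U u -> k u) ->
  forall u, charf U u -> conv (conv (charf U) k) (charf U) u.
Proof.
move=> UX Uk u /charfP Uu.
have [su ru] := (unit_s (UX _ Uu), unit_r (UX _ Uu)).
have cu : s u = r u by rewrite su ru.
have uu : mul u u = u by rewrite -{2}su mul_s.
apply/asboolP; exists u, u; split => //; last exact/charfP.
by apply/asboolP; exists u, u; split => //; [exact/charfP|exact: Uk].
Qed.

Section Congruence.
Variable R : (G -> bool) -> (G -> bool) -> Prop.
Hypothesis congR : congruence s r mul R.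

Lemma R_refl f : A f -> R f f. Proof. by case: congR => H _ _ _; apply: H. Qed.
Lemma R_sym f g : A f -> A g -> R f g -> R g f.
Proof. by case: congR => _ H _ _; apply: H. Qed.
Lemma R_trans f g h : A f -> A g -> A h -> R f g -> R g h -> R f h.
Proof. by case: congR => _ _ H _; apply: H. Qed.
Lemma R_add f f' g g' : A f -> A f' -> A g -> A g' -> R f f' -> R g g' ->
  R (badd f g) (badd f' g').
Proof. by case: congR => _ _ _ H ? ? ? ? ? ?; case: (H f f' g g'). Qed.
Lemma R_conv f f' g g' : A f -> A f' -> A g -> A g' -> R f f' -> R g g' ->
  R (conv f g) (conv f' g').
Proof. by case: congR => _ _ _ H ? ? ? ? ? ?; case: (H f f' g g'). Qed.

Definition null f := A f /\ R zerof f.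

Lemma null_zero : null zerof.
Proof. by split; [exact: steinberg_zero|exact: R_refl steinberg_zero]. Qed.

Lemma null_add f g : null f -> null g -> null (badd f g).
Proof.
move=> [Af R0f] [Ag R0g]; split; first exact: steinberg_add.
by rewrite -(baddK zerof); apply: R_add => //; exact: steinberg_zero.
Qed.

(* 0 ~ m and a <= m give 0 + a ~ m + a = m ~ 0 *)
Lemma null_below a m : A a -> null m -> (forall g, a g -> m g) -> null a.
Proof.
move=> Aa [Am R0m] le; split => //.
have A0 := steinberg_zero.
have h : R (badd zerof a) (badd m a) by apply: R_add => //; exact: R_refl.
rewrite (badd_absorb le) in h.
exact: R_trans A0 Am Aa R0m (R_sym Aa Am h).
Qed.

Lemma null_convl E f : A E -> null f -> null (conv E f).
Proof.
move=> AE [Af R0f]; split; first exact: steinberg_conv.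
by have := R_conv AE AE steinberg_zero Af (R_refl AE) R0f; rewrite conv0r.
Qed.

Lemma null_convr E f : A E -> null f -> null (conv f E).
Proof.
move=> AE [Af R0f]; split; first exact: steinberg_conv.
by have := R_conv steinberg_zero Af AE AE R0f (R_refl AE); rewrite conv0l.
Qed.

Lemma null_bsum (I : Type) (F : I -> G -> bool) l :
  (forall i, List.In i l -> null (F i)) -> null (bsum F l).
Proof.
elim: l => [|i l IH] nF /=; first exact: null_zero.
by apply: null_add; [apply: nF; left|apply: IH => j jl; apply: nF; right].
Qed.

Lemma null_steinberg : (forall B, compact_open_bisection s r B -> null (charf B)) ->
  forall f, A f -> null f.
Proof.
move=> nB f [n [Bs [cBs hBs]]].
suff -> : f = bsum (fun i => charf (Bs i)) (List.seq 0 n).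
  apply: null_bsum => i /List.in_seq ilt; apply: nB; apply: cBs; lia.
apply/funext => g.
rewrite (eq_asbool (hBs g)); apply/esym/eq_asbool; rewrite bsumP; split.
  by move=> [i [/List.in_seq ilt /charfP Bi]]; exists i => //; apply/ltP; lia.
by move=> [i /ltP ilt Bi]; exists i; split; [apply/List.in_seq; lia|exact/charfP].
Qed.

Lemma null_conjugate U E : compact_open_bisection s r U -> null (charf U) ->
  compact_open_bisection s r E -> E `<=` s @^-1` U ->
  null (conv (conv (charf E) (charf U)) (charf (inv @` E))) /\
  (forall e, E e -> conv (conv (charf E) (charf U)) (charf (inv @` E)) (r e)).
Proof.
move=> cU nU cE EU; have AE := steinberg_charf cE.
split; first by apply/null_convr/null_convl => //; exact/steinberg_charf/cob_inv.
move=> e Ee; apply/asboolP; exists e, (inv e); split; rewrite ?r_inv ?mulV //.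
- apply/asboolP; exists e, (s e); split; rewrite ?r_s ?mul_s //; apply/charfP => //.
  exact: EU.
- by apply/charfP; exists e.
Qed.

(* In a minimal groupoid, one null nonempty compact open set of units makes
   every compact open bisection B null: finitely many conjugates of U cover
   s(B) by the saturation property, and B <= B * (their sum). *)
Lemma null_bisections U : minimal s r -> compact U -> open U -> U `<=` X ->
  (exists u, U u) -> null (charf U) ->
  forall B, compact_open_bisection s r B -> null (charf B).
Proof.
move=> Hmin cU oU UX neU nU B cB; have cobU := cob_unit cU oU UX.
pose I := {E : set G | compact_open_bisection s r E /\ E `<=` s @^-1` U}.
pose m (i : I) := conv (conv (charf (sval i)) (charf U)) (charf (inv @` sval i)).
have [cB' _ _] := cB.
have csB : compact (s @` B).
  by apply: continuous_compact cB'; apply: continuous_subspaceT; exact: s_continuous.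
have cov w : (s @` B) w -> exists i : I, ~ (~` (r @` sval i)) w.
  move=> [b Bb <-]; have : X (s b) by exact: unit_of_s.
  rewrite -(saturation_full Hmin oU UX neU) => -[h Uh rh].
  have oUs : open (s @^-1` U) by apply: (continuousP _).1 oU; exact: s_continuous.
  have [E [cE Eh EU]] := cob_basis oUs Uh.
  by exists (exist _ E (conj cE EU)) => /= H; apply: H; exists h.
have clos (i : I) : closed (~` (r @` sval i)).
  by case: (svalP i) => -[_ oE _] _; apply: open_closedC; exact: r_open.
have [l Hl] := compact_finite_subcover csB clos cov.
have nM : null (bsum m l).
  by apply: null_bsum => i _; exact: (null_conjugate cobU nU (svalP i).1 (svalP i).2).1.
have AB := steinberg_charf cB.
apply: null_below AB (null_convl AB nM) _ => b /charfP Bb.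
apply/asboolP; exists b, (s b); split; rewrite ?r_s ?mul_s //; first exact/charfP.
have [i [Hi nr]] := Hl (s b) (ex_intro2 _ _ b Bb erefl).
have [e Ee <-] : (r @` sval i) (s b) by apply: contrapT.
apply/bsumP; exists i; split => //.
exact: (null_conjugate cobU nU (svalP i).1 (svalP i).2).2.
Qed.

(* A congruence identifying two distinct functions identifies two comparable
   ones, h1 <= h2 with h1 <> h2: take f + g, which is congruent to both. *)
Lemma comparable_pair f g : A f -> A g -> R f g -> f <> g ->
  exists h1 h2, [/\ A h1, A h2, R h1 h2, (forall x, h1 x -> h2 x) &
    exists x, h2 x /\ ~~ h1 x].
Proof.
move=> Af Ag Rfg nfg; have Ah := steinberg_add Af Ag.
have Rfh : R f (badd f g).
  by have := R_add Af Af Af Ag (R_refl Af) Rfg; rewrite baddK.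
have Rgh : R g (badd f g).
  by have := R_add Ag Ag Ag Af (R_refl Ag) (R_sym Af Ag Rfg); rewrite baddK baddC.
have below k : k <> badd f g -> (forall x, k x -> badd f g x) ->
    exists x, badd f g x /\ ~~ k x.
  move=> nk le; apply: contrapT => H; apply: nk; apply/funext => x.
  apply/idP/idP => [/le //|hx]; apply: contrapT => /negP nkx; apply: H.
  by exists x.
have [efh|nfh] := pselect (f = badd f g).
- have ngh : g <> badd f g by move=> e; apply: nfg; rewrite efh -e.
  exists g, (badd f g); split => //; first by move=> y gy; rewrite /badd gy orbT.
  by apply: below => // y gy; rewrite /badd gy orbT.
- exists f, (badd f g); split => //; first by move=> y fy; rewrite /badd fy.
  by apply: below => // y fy; rewrite /badd fy.
Qed.

(* In an effective groupoid, if h1 <= h2 are congruent and a nonempty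
   compact open bisection C lies in supp h2 but misses supp h1, then some
   nonempty compact open set of units U is null: translate by C^-1, so that
   h2 covers s(C) while h1 has no units in its support, then compress by a
   small U inside s(C) that the support of C^-1 h1 avoids. *)
Lemma null_unit_set h1 h2 C : effective s r -> A h1 -> A h2 -> R h1 h2 ->
  compact_open_bisection s r C -> (exists c, C c) ->
  (forall c, C c -> h2 c) -> (forall c, C c -> ~~ h1 c) ->
  exists U, [/\ compact U, open U, U `<=` X, (exists u, U u) & null (charf U)].
Proof.
move=> Heff Ah1 Ah2 R12 cC [c0 Cc0] C2 C1.
have ACi := steinberg_charf (cob_inv cC).
pose k1 := conv (charf (inv @` C)) h1; pose k2 := conv (charf (inv @` C)) h2.
have [Ak1 Ak2] : A k1 /\ A k2 by split; exact: steinberg_conv.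
have [_ oC _] := cC.
have sCX : s @` C `<=` X by move=> _ [c _ <-]; exact: unit_of_s.
have [n [Ds [cDs hDs]]] := Ak1.
have hD j : (j < n)%N ->
    compact_open_bisection s r (Ds j) /\ forall d, Ds j d -> ~ X d.
  move=> jn; split; first exact: cDs.
  by move=> d Dd; apply: (conv_inv_no_units C1); apply/(hDs d).2; exists j.
have [Om [oOm OmC [w Omw] avOm]] := shrink_avoiding_finite Heff (s_open oC) sCX
  (ex_intro _ (s c0) (ex_intro2 _ _ c0 Cc0 erefl)) hD.
have [U [cU oU UOm Uw]] := compact_open_basis unit_space_open unit_lc
  unit_hausdorff unit_td (sCX _ (OmC _ Omw)) oOm Omw.
have UX : U `<=` X by move=> y /UOm [].
have AU := steinberg_charf (cob_unit cU oU UX).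
exists U; split => //; first by exists w.
have avU : avoids U [set d | k1 d].
  move=> d /(hDs d).1 [j jn Dd] [Usd Urd].
  by apply: (avOm j jn d Dd); split; [case: (UOm _ Usd)|case: (UOm _ Urd)].
have Rk : R k1 k2 := R_conv ACi ACi Ah1 Ah2 (R_refl ACi) R12.
have Rk' := R_conv AU AU Ak1 Ak2 (R_refl AU) Rk.
have := R_conv (steinberg_conv AU Ak1) (steinberg_conv AU Ak2) AU AU Rk' (R_refl AU).
rewrite (compress_avoided UX avU) => Rm.
have Am2 : A (conv (conv (charf U) k2) (charf U)).
  by do 2!apply: steinberg_conv => //.
apply: (null_below AU (conj Am2 Rm)).
apply: compress_units => // u Uu.
by apply: conv_inv_units C2 _ _; apply: OmC; case: (UOm _ Uu).
Qed.

Lemma nontrivial_congruence_full f g : minimal s r -> effective s r ->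
  (forall S : set G, compact S -> open S -> regopen S) ->
  A f -> A g -> R f g -> f <> g -> forall f' g', A f' -> A g' -> R f' g'.
Proof.
move=> Hmin Heff Hreg Af Ag Rfg nfg.
have [h1 [h2 [Ah1 Ah2 R12 le12 [x h2x]]]] := comparable_pair Af Ag Rfg nfg.
have [C [cC neC Ch2 Ch1]] := separating_bisection Hreg Ah1 Ah2 (ex_intro _ x h2x).
have [U [cU oU UX neU nU]] := null_unit_set Heff Ah1 Ah2 R12 cC neC Ch2 Ch1.
have nall := null_steinberg (null_bisections Hmin cU oU UX neU nU).
move=> f' g' Af' Ag'; have [[_ R0f'] [_ R0g']] := (nall _ Af', nall _ Ag').
exact: R_trans Af' steinberg_zero Ag' (R_sym steinberg_zero Af' R0f') R0g'.
Qed.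

End Congruence.
End Ample.
End Groupoid.

Theorem corollary3p9 (G : topologicalType) (s r : G -> G)
  (mul : G -> G -> G) (inv : G -> G) :
  ample_groupoid s r mul inv ->
  @second_countable G ->
  minimal s r -> effective s r ->
  (forall A : set G, compact A -> open A -> regopen A) ->
  congruence_simple s r mul.
Proof.
move=> [grp mul_cont inv_cont [lc haus td] [s_lh r_lh]] _ Hmin Heff Hreg R congR.
have [[f [g [Af Ag Rfg nfg]]]|R_trivial] := pselect (exists f g,
  [/\ steinberg s r f, steinberg s r g, R f g & f <> g]).
  by left; exact: (nontrivial_congruence_full grp mul_cont inv_cont s_lh r_lh
    haus lc td congR Hmin Heff Hreg Af Ag Rfg nfg).
right => f g Af Ag Rfg; apply: contrapT => nfg.
by apply: R_trivial; exists f, g.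
Qed.
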